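(* Let $(\mathbb{X},\otimes,K)$ be a linear category with monoidal coalgebra modality $(!, \delta, \varepsilon, \Delta, \mathsf{e}, \mathsf{m},\mathsf{m}_K)$, and let $(\mathsf{T},\mu,\eta,\mathsf{n},\mathsf{n}_K,\lambda)$ be a $\mathsf{MELL}$ lifting monad on it. Then the Eilenberg-Moore category $(\mathbb{X}^\mathsf{T},\otimes^\mathsf{n},(K,\mathsf{n}_K))$ is a linear category such that the forgetful functor $\mathsf{U}^\mathsf{T}$ preserves the linear category structure (symmetric monoidal closed structure and monoidal coalgebra modality) strictly.
   Context: Composition is in diagrammatic order. A linear category is a symmetric monoidal closed category equipped with a monoidal coalgebra modality $(!,\delta,\varepsilon,\Delta,\mathsf{e},\mathsf{m},\mathsf{m}_K)$: a symmetric monoidal comonad $(!,\delta,\varepsilon,\mathsf{m},\mathsf{m}_K)$, with $\mathsf{m}_{A,B}:!(A)\otimes!(B)\to!(A\otimes B)$ and $\mathsf{m}_K:K\to!(K)$, together with natural cocommutative comonoids $(!(A),\Delta_A,\mathsf{e}_A)$ such that $\delta_A$ is a comonoid morphism and $\Delta,\mathsf{e}$ are monoidal transformations and $!$-coalgebra morphisms. A symmetric comonoidal monad $(\mathsf{T},\mu,\eta,\mathsf{n},\mathsf{n}_K)$ is a monad with symmetric oplax monoidal structure $\mathsf{n}_{A,B}:\mathsf{T}(A\otimes B)\to\mathsf{T}(A)\otimes\mathsf{T}(B)$, $\mathsf{n}_K:\mathsf{T}(K)\to K$ compatible with $\mu,\eta$; its Eilenberg-Moore category has tensor $(A,\nu)\otimes^\mathsf{n}(B,\nu')=(A\otimes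 B,\mathsf{n}_{A,B};(\nu\otimes\nu'))$ and unit $(K,\mathsf{n}_K)$. It is a symmetric Hopf monad if its fusion operators $\mathsf{h}^l_{A,B}=\mathsf{n}_{A,\mathsf{T}(B)};(1_{\mathsf{T}(A)}\otimes\mu_B):\mathsf{T}(A\otimes\mathsf{T}(B))\to\mathsf{T}(A)\otimes\mathsf{T}(B)$ and $\mathsf{h}^r_{A,B}=\mathsf{n}_{\mathsf{T}(A),B};(\mu_A\otimes1_{\mathsf{T}(B)}):\mathsf{T}(\mathsf{T}(A)\otimes B)\to\mathsf{T}(A)\otimes\mathsf{T}(B)$ are isomorphisms. An exponential lifting monad is a symmetric comonoidal monad with a symmetric monoidal mixed distributive law $\lambda_A:\mathsf{T}!(A)\to!\mathsf{T}(A)$ over the monoidal coalgebra modality, i.e. $\mu_{!(A)};\lambda_A=\mathsf{T}(\lambda_A);\lambda_{\mathsf{T}(A)};!(\mu_A)$, $\eta_{!(A)};\lambda_A=!(\eta_A)$, $\mathsf{T}(\delta_A);\lambda_{!(A)};!(\lambda_A)=\lambda_A;\delta_{\mathsf{T}(A)}$, $\lambda_A;\varepsilon_{\mathsf{T}(A)}=\mathsf{T}(\varepsilon_A)$, $\mathsf{n}_{!(A),!(B)};(\lambda_A\otimes\lambda_B);\mathsf{m}_{\mathsf{T}(A),\mathsf{T}(B)}=\mathsf{T}(\mathsf{m}_{A,B});\lambda_{A\otimes B};!(\mathsf{n}_{A,B})$, $\mathsf{n}_K;\mathsf{m}_K=\mathsf{T}(\mathsf{m}_K);\lambda_K;!(\mathsf{n}_K)$.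 A $\mathsf{MELL}$ lifting monad on a linear category is an exponential lifting monad whose underlying symmetric comonoidal monad is a symmetric Hopf monad. *)

(* Composition is written in DIAGRAMMATIC
   order: f ;; g means "first f, then g". *)
From Stdlib Require Import ProofIrrelevance.

Set Implicit Arguments.
Unset Strict Implicit.

Record Category := {
  Ob :> Type;
  Hom : Ob -> Ob -> Type;
  comp : forall a b c : Ob, Hom a b -> Hom b c -> Hom a c;
  idm : forall a : Ob, Hom a a;
  comp_idl : forall a b (f : Hom a b), comp (idm a) f = f;
  comp_idr : forall a b (f : Hom a b), comp f (idm b) = f;
  comp_assoc : forall a b c d (f : Hom a b) (g : Hom b c) (h : Hom c d),
      comp (comp f g) h = comp f (comp g h) }.

Arguments Hom {C} _ _ : rename.
Arguments comp {C a b c} _ _ : rename.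
Arguments idm {C} _ : rename.
Arguments comp_idl {C a b} _ : rename.
Arguments comp_idr {C a b} _ : rename.
Arguments comp_assoc {C a b c d} _ _ _ : rename.

Notation "f ;; g" := (comp f g) (at level 40, left associativity).

(** Heterogeneous equality of morphisms (equality of the triples
    (source, target, morphism)); used to express that a functor preserves
    structure *strictly* (on the nose). *)
Definition hom_heq {C : Category} {a b a' b' : C} (f : Hom a b) (g : Hom a' b')
  : Prop :=
  existT (fun p : C * C => Hom (fst p) (snd p)) (a, b) f
  = existT (fun p : C * C => Hom (fst p) (snd p)) (a', b') g.

Section SMCDef.
Variable C : Category.

Record SMCData := {
  tens : C -> C -> C;
  tensh : forall a b c d : C, Hom a b -> Hom c d -> Hom (tens a c) (tens b d);
  unitK : C;
  alpha : forall a b c : C, Hom (tens (tens a b) c) (tens a (tens b c));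
  alpha_inv : forall a b c : C, Hom (tens a (tens b c)) (tens (tens a b) c);
  lu : forall a : C, Hom (tens unitK a) a;
  lu_inv : forall a : C, Hom a (tens unitK a);
  ru : forall a : C, Hom (tens a unitK) a;
  ru_inv : forall a : C, Hom a (tens a unitK);
  sym : forall a b : C, Hom (tens a b) (tens b a) }.
End SMCDef.

Arguments tens {C} V _ _ : rename.
Arguments tensh {C} V {a b c d} _ _ : rename.
Arguments unitK {C} V : rename.
Arguments alpha {C} V _ _ _ : rename.
Arguments alpha_inv {C} V _ _ _ : rename.
Arguments lu {C} V _ : rename.
Arguments lu_inv {C} V _ : rename.
Arguments ru {C} V _ : rename.
Arguments ru_inv {C} V _ : rename.
Arguments sym {C} V _ _ : rename.

Section SMCAxioms.
Context {C : Category} (V : SMCData C).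
Local Notation "a ⊗ b" := (tens V a b) (at level 30, right associativity).
Local Notation "f ⊠ g" := (tensh V f g) (at level 30, right associativity).
Local Notation K := (unitK V).

Record isSMC : Prop := {
  tensh_id : forall a b : C, idm a ⊠ idm b = idm (a ⊗ b);
  tensh_comp : forall a b c a' b' c' (f : Hom a b) (g : Hom b c)
      (f' : Hom a' b') (g' : Hom b' c'),
      (f ;; g) ⊠ (f' ;; g') = (f ⊠ f') ;; (g ⊠ g');
  alpha_nat : forall a b c a' b' c' (f : Hom a a') (g : Hom b b') (h : Hom c c'),
      ((f ⊠ g) ⊠ h) ;; alpha V a' b' c' = alpha V a b c ;; (f ⊠ (g ⊠ h));
  alpha_iso1 : forall a b c, alpha V a b c ;; alpha_inv V a b c = idm _;
  alpha_iso2 : forall a b c, alpha_inv V a b c ;; alpha V a b c = idm _;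
  lu_nat : forall a b (f : Hom a b), (idm K ⊠ f) ;; lu V b = lu V a ;; f;
  lu_iso1 : forall a, lu V a ;; lu_inv V a = idm _;
  lu_iso2 : forall a, lu_inv V a ;; lu V a = idm _;
  ru_nat : forall a b (f : Hom a b), (f ⊠ idm K) ;; ru V b = ru V a ;; f;
  ru_iso1 : forall a, ru V a ;; ru_inv V a = idm _;
  ru_iso2 : forall a, ru_inv V a ;; ru V a = idm _;
  sym_nat : forall a b a' b' (f : Hom a a') (g : Hom b b'),
      (f ⊠ g) ;; sym V a' b' = sym V a b ;; (g ⊠ f);
  sym_invol : forall a b, sym V a b ;; sym V b a = idm _;
  pentagon : forall a b c d,
      alpha V (a ⊗ b) c d ;; alpha V a b (c ⊗ d)
      = (alpha V a b c ⊠ idm d) ;; alpha V a (b ⊗ c) d ;; (idm a ⊠ alpha V b c d);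
  triangle : forall a b,
      alpha V a K b ;; (idm a ⊠ lu V b) = ru V a ⊠ idm b;
  hexagon : forall a b c,
      alpha V a b c ;; sym V a (b ⊗ c) ;; alpha V b c a
      = (sym V a b ⊠ idm c) ;; alpha V b a c ;; (idm b ⊠ sym V a c) }.

Record ClosedData := {
  ihom : C -> C -> C;
  ev : forall a b : C, Hom (a ⊗ ihom a b) b;
  cur : forall a b c : C, Hom (a ⊗ c) b -> Hom c (ihom a b) }.

Record isClosed (W : ClosedData) : Prop := {
  cur_beta : forall a b c (f : Hom (a ⊗ c) b),
      (idm a ⊠ cur W f) ;; ev W a b = f;
  cur_eta : forall a b c (g : Hom c (ihom W a b)),
      cur W ((idm a ⊠ g) ;; ev W a b) = g }.

Definition interchange (w x y z : C) : Hom ((w ⊗ x) ⊗ (y ⊗ z)) ((w ⊗ y) ⊗ (x ⊗ z)) :=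
  alpha V w x (y ⊗ z) ;; (idm w ⊠ alpha_inv V x y z)
  ;; (idm w ⊠ (sym V x y ⊠ idm z)) ;; (idm w ⊠ alpha V y x z)
  ;; alpha_inv V w y (x ⊗ z).

Record MCMData := {
  bob : C -> C;
  bhom : forall a b : C, Hom a b -> Hom (bob a) (bob b);
  delta : forall a : C, Hom (bob a) (bob (bob a));
  eps : forall a : C, Hom (bob a) a;
  dup : forall a : C, Hom (bob a) (bob a ⊗ bob a);
  er : forall a : C, Hom (bob a) K;
  mm : forall a b : C, Hom (bob a ⊗ bob b) (bob (a ⊗ b));
  mK : Hom K (bob K) }.

Section MCMAx.
Variable B : MCMData.
Local Notation "! a" := (bob B a) (at level 20, right associativity).
Local Notation "!h f" := (bhom B f) (at level 20, right associativity).
Local Notation δ := (delta B).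
Local Notation ε := (eps B).
Local Notation Δ := (dup B).
Local Notation e := (er B).
Local Notation m := (mm B).
Local Notation mk := (mK B).

Record isMCM : Prop := {
  bhom_id : forall a, !h (idm a) = idm (! a);
  bhom_comp : forall a b c (f : Hom a b) (g : Hom b c), !h (f ;; g) = !h f ;; !h g;
  delta_nat : forall a b (f : Hom a b), !h f ;; δ b = δ a ;; !h (!h f);
  eps_nat : forall a b (f : Hom a b), !h f ;; ε b = ε a ;; f;
  comonad_counit_l : forall a, δ a ;; ε (! a) = idm (! a);
  comonad_counit_r : forall a, δ a ;; !h (ε a) = idm (! a);
  comonad_coassoc : forall a, δ a ;; δ (! a) = δ a ;; !h (δ a);
  m_nat : forall a b a' b' (f : Hom a a') (g : Hom b b'),
      (!h f ⊠ !h g) ;; m a' b' = m a b ;; !h (f ⊠ g);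
  m_assoc : forall a b c,
      alpha V (! a) (! b) (! c) ;; (idm (! a) ⊠ m b c) ;; m a (b ⊗ c)
      = (m a b ⊠ idm (! c)) ;; m (a ⊗ b) c ;; !h (alpha V a b c);
  m_lunit : forall a, lu V (! a) = (mk ⊠ idm (! a)) ;; m K a ;; !h (lu V a);
  m_runit : forall a, ru V (! a) = (idm (! a) ⊠ mk) ;; m a K ;; !h (ru V a);
  m_sym : forall a b, sym V (! a) (! b) ;; m b a = m a b ;; !h (sym V a b);
  delta_m : forall a b,
      m a b ;; δ (a ⊗ b) = (δ a ⊠ δ b) ;; m (! a) (! b) ;; !h (m a b);
  delta_mK : mk ;; δ K = mk ;; !h mk;
  eps_m : forall a b, m a b ;; ε (a ⊗ b) = ε a ⊠ ε b;
  eps_mK : mk ;; ε K = idm K;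
  dup_nat : forall a b (f : Hom a b), !h f ;; Δ b = Δ a ;; (!h f ⊠ !h f);
  er_nat : forall a b (f : Hom a b), !h f ;; e b = e a;
  dup_coassoc : forall a,
      Δ a ;; (Δ a ⊠ idm (! a)) ;; alpha V (! a) (! a) (! a) = Δ a ;; (idm (! a) ⊠ Δ a);
  dup_counit_l : forall a, Δ a ;; (e a ⊠ idm (! a)) ;; lu V (! a) = idm (! a);
  dup_counit_r : forall a, Δ a ;; (idm (! a) ⊠ e a) ;; ru V (! a) = idm (! a);
  dup_cocomm : forall a, Δ a ;; sym V (! a) (! a) = Δ a;
  delta_dup : forall a, δ a ;; Δ (! a) = Δ a ;; (δ a ⊠ δ a);
  delta_er : forall a, δ a ;; e (! a) = e a;
  dup_m : forall a b,
      m a b ;; Δ (a ⊗ b)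
      = (Δ a ⊠ Δ b) ;; interchange (! a) (! a) (! b) (! b) ;; (m a b ⊠ m a b);
  dup_mK : mk ;; Δ K = lu_inv V K ;; (mk ⊠ mk);
  er_m : forall a b, m a b ;; e (a ⊗ b) = (e a ⊠ e b) ;; lu V K;
  er_mK : mk ;; e K = idm K;
  dup_coalg : forall a, δ a ;; !h (Δ a) = Δ a ;; (δ a ⊠ δ a) ;; m (! a) (! a);
  er_coalg : forall a, δ a ;; !h (e a) = e a ;; mk }.
End MCMAx.

Record MonadData := {
  Tob : C -> C;
  Thom : forall a b : C, Hom a b -> Hom (Tob a) (Tob b);
  mu : forall a : C, Hom (Tob (Tob a)) (Tob a);
  eta : forall a : C, Hom a (Tob a);
  nn : forall a b : C, Hom (Tob (a ⊗ b)) (Tob a ⊗ Tob b);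
  nK : Hom (Tob K) K }.

Section MonadAx.
Variable M : MonadData.
Local Notation T := (Tob M).
Local Notation Th := (Thom M).
Local Notation μ := (mu M).
Local Notation η := (eta M).
Local Notation n := (nn M).
Local Notation nk := (nK M).

Record isSCMonad : Prop := {
  Thom_id : forall a, Th (idm a) = idm (T a);
  Thom_comp : forall a b c (f : Hom a b) (g : Hom b c), Th (f ;; g) = Th f ;; Th g;
  mu_nat : forall a b (f : Hom a b), Th (Th f) ;; μ b = μ a ;; Th f;
  eta_nat : forall a b (f : Hom a b), f ;; η b = η a ;; Th f;
  mu_assoc : forall a, μ (T a) ;; μ a = Th (μ a) ;; μ a;
  mu_eta_l : forall a, η (T a) ;; μ a = idm (T a);
  mu_eta_r : forall a, Th (η a) ;; μ a = idm (T a);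
  nn_nat : forall a b a' b' (f : Hom a a') (g : Hom b b'),
      Th (f ⊠ g) ;; n a' b' = n a b ;; (Th f ⊠ Th g);
  nn_assoc : forall a b c,
      Th (alpha V a b c) ;; n a (b ⊗ c) ;; (idm (T a) ⊠ n b c)
      = n (a ⊗ b) c ;; (n a b ⊠ idm (T c)) ;; alpha V (T a) (T b) (T c);
  nn_lunit : forall a, n K a ;; (nk ⊠ idm (T a)) ;; lu V (T a) = Th (lu V a);
  nn_runit : forall a, n a K ;; (idm (T a) ⊠ nk) ;; ru V (T a) = Th (ru V a);
  nn_sym : forall a b, n a b ;; sym V (T a) (T b) = Th (sym V a b) ;; n b a;
  mu_nn : forall a b, μ (a ⊗ b) ;; n a b = Th (n a b) ;; n (T a) (T b) ;; (μ a ⊠ μ b);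
  mu_nK : μ K ;; nk = Th nk ;; nk;
  eta_nn : forall a b, η (a ⊗ b) ;; n a b = η a ⊠ η b;
  eta_nK : η K ;; nk = idm K }.

Definition fusion_l (a b : C) : Hom (T (a ⊗ T b)) (T a ⊗ T b) :=
  n a (T b) ;; (idm (T a) ⊠ μ b).
Definition fusion_r (a b : C) : Hom (T (T a ⊗ b)) (T a ⊗ T b) :=
  n (T a) b ;; (μ a ⊠ idm (T b)).

Definition is_iso {a b : C} (f : Hom a b) : Prop :=
  exists g : Hom b a, f ;; g = idm a /\ g ;; f = idm b.

Definition isHopf : Prop :=
  forall a b : C, is_iso (fusion_l a b) /\ is_iso (fusion_r a b).
End MonadAx.

Section LiftAx.
Variables (B : MCMData) (M : MonadData).
Local Notation "! a" := (bob B a) (at level 20, right associativity).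
Local Notation "!h f" := (bhom B f) (at level 20, right associativity).
Local Notation T := (Tob M).
Local Notation Th := (Thom M).

Record ExpLifting := {
  dist : forall a : C, Hom (T (! a)) (! (T a));
  dist_nat : forall a b (f : Hom a b), Th (!h f) ;; dist b = dist a ;; !h (Th f);
  dist_mu : forall a,
      mu M (! a) ;; dist a = Th (dist a) ;; dist (T a) ;; !h (mu M a);
  dist_eta : forall a, eta M (! a) ;; dist a = !h (eta M a);
  dist_delta : forall a,
      Th (delta B a) ;; dist (! a) ;; !h (dist a) = dist a ;; delta B (T a);
  dist_eps : forall a, dist a ;; eps B (T a) = Th (eps B a);
  dist_m : forall a b,
      nn M (! a) (! b) ;; (dist a ⊠ dist b) ;; mm B (T a) (T b)
      = Th (mm B a b) ;; dist (a ⊗ b) ;; !h (nn M a b);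
  dist_mK : nK M ;; mK B = Th (mK B) ;; dist K ;; !h (nK M) }.
End LiftAx.
End SMCAxioms.

Arguments ihom {C V} W _ _ : rename.
Arguments ev {C V} W _ _ : rename.
Arguments cur {C V} W {a b c} _ : rename.
Arguments bob {C V} B _ : rename.
Arguments bhom {C V} B {a b} _ : rename.
Arguments delta {C V} B _ : rename.
Arguments eps {C V} B _ : rename.
Arguments dup {C V} B _ : rename.
Arguments er {C V} B _ : rename.
Arguments mm {C V} B _ _ : rename.
Arguments mK {C V} B : rename.
Arguments Tob {C V} M _ : rename.
Arguments Thom {C V} M {a b} _ : rename.
Arguments mu {C V} M _ : rename.
Arguments eta {C V} M _ : rename.
Arguments nn {C V} M _ _ : rename.
Arguments nK {C V} M : rename.
Arguments dist {C V B M} L _ : rename.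

Record LinearCategory (C : Category) := {
  lc_V : SMCData C;
  lc_V_ax : isSMC lc_V;
  lc_W : ClosedData lc_V;
  lc_W_ax : isClosed lc_W;
  lc_B : MCMData lc_V;
  lc_B_ax : isMCM lc_B }.

Record MELLLiftingMonad (C : Category) (L : LinearCategory C) := {
  ml_M : MonadData (lc_V L);
  ml_M_ax : isSCMonad ml_M;
  ml_hopf : isHopf ml_M;
  ml_lift : ExpLifting (lc_B L) ml_M }.

Section EM.
Context {C : Category} {V : SMCData C} (M : MonadData V) (HM : isSCMonad M).

Record EMob := {
  car : C;
  act : Hom (Tob M car) car;
  act_eta : eta M car ;; act = idm car;
  act_mu : mu M car ;; act = Thom M act ;; act }.

Definition EMhom (x y : EMob) : Type :=
  { f : Hom (car x) (car y) | act x ;; f = Thom M f ;; act y }.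

Definition EMcomp (x y z : EMob) (f : EMhom x y) (g : EMhom y z) : EMhom x z.
Proof.
  exists (proj1_sig f ;; proj1_sig g).
  destruct f as [f Hf], g as [g Hg]; simpl.
  rewrite <- comp_assoc, Hf, comp_assoc, Hg, <- comp_assoc, <- (Thom_comp HM).
  reflexivity.
Defined.

Definition EMid (x : EMob) : EMhom x x.
Proof.
  exists (idm (car x)).
  rewrite (Thom_id HM), comp_idl, comp_idr. reflexivity.
Defined.

Lemma EMhom_eq (x y : EMob) (f g : EMhom x y) : proj1_sig f = proj1_sig g -> f = g.
Proof.
  destruct f as [f Hf], g as [g Hg]; simpl; intros ->.
  f_equal; apply proof_irrelevance.
Qed.

Definition EMcat : Category.
Proof.
  refine (@Build_Category EMob EMhom EMcomp EMid _ _ _).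
  - intros a b f; apply EMhom_eq; simpl; apply comp_idl.
  - intros a b f; apply EMhom_eq; simpl; apply comp_idr.
  - intros a b c d f g h; apply EMhom_eq; simpl; apply comp_assoc.
Defined.

Definition UT {x y : EMcat} (f : Hom x y) : Hom (car x) (car y) := proj1_sig f.
End EM.

Section StrictPres.
Context {C : Category} (L : LinearCategory C) (M : MonadData (lc_V L))
        (HM : isSCMonad M) (LT : LinearCategory (EMcat HM)).
Local Notation V := (lc_V L).
Local Notation W := (lc_W L).
Local Notation B := (lc_B L).
Local Notation VT := (lc_V LT).
Local Notation WT := (lc_W LT).
Local Notation BT := (lc_B LT).

Record EM_linear_strict : Prop := {
  sp_tens_car : forall x y : EMcat HM, car (tens VT x y) = tens V (car x) (car y);
  sp_tens_act : forall x y : EMcat HM,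
      hom_heq (act (tens VT x y)) (nn M (car x) (car y) ;; tensh V (act x) (act y));
  sp_unit_car : car (unitK VT) = unitK V;
  sp_unit_act : hom_heq (act (unitK VT)) (nK M);
  sp_tensh : forall (a b c d : EMcat HM) (f : Hom a b) (g : Hom c d),
      hom_heq (UT (tensh VT f g)) (tensh V (UT f) (UT g));
  sp_alpha : forall a b c : EMcat HM,
      hom_heq (UT (alpha VT a b c)) (alpha V (car a) (car b) (car c));
  sp_alpha_inv : forall a b c : EMcat HM,
      hom_heq (UT (alpha_inv VT a b c)) (alpha_inv V (car a) (car b) (car c));
  sp_lu : forall a : EMcat HM, hom_heq (UT (lu VT a)) (lu V (car a));
  sp_lu_inv : forall a : EMcat HM, hom_heq (UT (lu_inv VT a)) (lu_inv V (car a));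
  sp_ru : forall a : EMcat HM, hom_heq (UT (ru VT a)) (ru V (car a));
  sp_ru_inv : forall a : EMcat HM, hom_heq (UT (ru_inv VT a)) (ru_inv V (car a));
  sp_sym : forall a b : EMcat HM, hom_heq (UT (sym VT a b)) (sym V (car a) (car b));
  sp_ihom : forall a b : EMcat HM, car (ihom WT a b) = ihom W (car a) (car b);
  sp_ev : forall a b : EMcat HM, hom_heq (UT (ev WT a b)) (ev W (car a) (car b));
  sp_cur : forall (a b c : EMcat HM) (f : Hom (tens VT a c) b)
      (g : Hom (tens V (car a) (car c)) (car b)),
      hom_heq (UT f) g -> hom_heq (UT (cur WT f)) (cur W g);
  sp_bob : forall a : EMcat HM, car (bob BT a) = bob B (car a);
  sp_bhom : forall (a b : EMcat HM) (f : Hom a b),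
      hom_heq (UT (bhom BT f)) (bhom B (UT f));
  sp_delta : forall a : EMcat HM, hom_heq (UT (delta BT a)) (delta B (car a));
  sp_eps : forall a : EMcat HM, hom_heq (UT (eps BT a)) (eps B (car a));
  sp_dup : forall a : EMcat HM, hom_heq (UT (dup BT a)) (dup B (car a));
  sp_er : forall a : EMcat HM, hom_heq (UT (er BT a)) (er B (car a));
  sp_mm : forall a b : EMcat HM, hom_heq (UT (mm BT a b)) (mm B (car a) (car b));
  sp_mK : hom_heq (UT (mK BT)) (mK B) }.
End StrictPres.

(* The tensor of algebras (A, a) and (B, b) is A ⊗ B with action n ; (a ⊗ b), and
   the axioms of a symmetric comonoidal monad say exactly that the associator,
   unitors and symmetry of X are algebra maps.  For the closed structure, the
   Hopf condition makes n ; (a ⊗ 1) : T (A ⊗ Y) -> A ⊗ T Y invertible for every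
   algebra (A, a) (for the free algebra it is the right fusion operator), and
   [A, B] gets the action obtained by currying its inverse followed by T ev and
   the action of B.  The exponential of (A, a) is !A with action λ ; !a; the
   axioms of a monoidal mixed distributive law make δ, ε, m and m_K algebra
   maps.  That Δ and e are algebra maps is not an axiom: λ is a morphism of
   !-coalgebras, and a coalgebra map into K, resp. into !P ⊗ !Q, is determined
   by the counit, resp. by its two components.  Every structure map of X^T is
   the one of X, so U^T preserves the structure strictly. *)

From Stdlib Require Import Eqdep ClassicalEpsilon.

Ltac assoc_r := repeat rewrite comp_assoc.

Ltac instantiate_all H :=
  lazymatch type of H with
  | forall _ : _, _ => let H' := open_constr:(H _) in instantiate_all H'
  | _ => H
  end.

Lemma comp_eq_r {C : Category} {a b d : C} {l r : Hom a b} (E : l = r) (k : Hom b d) :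
  l ;; k = r ;; k.
Proof. now rewrite E. Qed.

(* Rewriting inside right-associated composites: the equation is also
   right-associated and, if needed, post-composed with a fresh [k], so that
   its left-hand side matches a contiguous piece of a composite chain. *)
Ltac arewrite_eq E :=
  assoc_r;
  first [ rewrite E
        | let E' := fresh "E" in
          epose proof E as E'; repeat rewrite comp_assoc in E';
          rewrite E'; clear E'
        | let E' := fresh "E" in
          epose proof (comp_eq_r E _) as E'; repeat rewrite comp_assoc in E';
          rewrite E'; clear E' ];
  assoc_r.

Tactic Notation "arewrite" uconstr(H) :=
  let H0 := open_constr:(H) in let E := instantiate_all H0 in arewrite_eq E.
Tactic Notation "arewrite" "<-" uconstr(H) :=
  let H0 := open_constr:(H) in let E := instantiate_all H0 in arewrite_eq (eq_sym E).

Lemma split_epi_cancel {C : Category} {a b c : C} {f : Hom a b} {g : Hom b a}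
    (Hgf : g ;; f = idm b) (x y : Hom b c) :
  f ;; x = f ;; y -> x = y.
Proof.
  intros E.
  now rewrite <- (comp_idl x), <- (comp_idl y), <- Hgf, !comp_assoc, E.
Qed.

Lemma split_mono_cancel {C : Category} {a b c : C} {f : Hom b c} {g : Hom c b}
    (Hfg : f ;; g = idm b) (x y : Hom a b) :
  x ;; f = y ;; f -> x = y.
Proof.
  intros E.
  now rewrite <- (comp_idr x), <- (comp_idr y), <- Hfg, <- !comp_assoc, E.
Qed.

Section SymmetricMonoidal.
Context {C : Category} {V : SMCData C} (HV : isSMC V).
Local Notation "a ⊗ b" := (tens V a b) (at level 30, right associativity).
Local Notation "f ⊠ g" := (tensh V f g) (at level 30, right associativity).
Local Notation K := (unitK V).

Lemma tensh_split_l {a b c d : C} (f : Hom a b) (g : Hom c d) :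
  f ⊠ g = (f ⊠ idm c) ;; (idm b ⊠ g).
Proof. now rewrite <- (tensh_comp HV), comp_idl, comp_idr. Qed.

Lemma tensh_split_r {a b c d : C} (f : Hom a b) (g : Hom c d) :
  f ⊠ g = (idm a ⊠ g) ;; (f ⊠ idm d).
Proof. now rewrite <- (tensh_comp HV), comp_idl, comp_idr. Qed.

Lemma tensh_idC {a b c d : C} (f : Hom a b) (g : Hom c d) :
  (idm a ⊠ g) ;; (f ⊠ idm d) = (f ⊠ idm c) ;; (idm b ⊠ g).
Proof. now rewrite <- tensh_split_l, <- tensh_split_r. Qed.

Lemma tensh_compl {a b c d e : C} (f : Hom a b) (g : Hom b c) (h : Hom d e) :
  (f ;; g) ⊠ h = (f ⊠ idm d) ;; (g ⊠ h).
Proof. now rewrite <- (tensh_comp HV), comp_idl. Qed.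

Lemma tensh_compr {a b c d e : C} (f : Hom a b) (g : Hom b c) (h : Hom d e) :
  h ⊠ (f ;; g) = (idm d ⊠ f) ;; (h ⊠ g).
Proof. now rewrite <- (tensh_comp HV), comp_idl. Qed.

Lemma tensh_slide_r {a b c d d' e : C} (f : Hom a b) {g : Hom c d} {h : Hom d e}
    {h' : Hom c d'} {g' : Hom d' e} :
  g ;; h = h' ;; g' -> (f ⊠ g) ;; (idm b ⊠ h) = (idm a ⊠ h') ;; (f ⊠ g').
Proof. intros E. now rewrite <- !(tensh_comp HV), comp_idl, comp_idr, E. Qed.

Lemma tensh_slide_l {a b c d d' e : C} (f : Hom a b) {g : Hom c d} {h : Hom d e}
    {h' : Hom c d'} {g' : Hom d' e} :
  g ;; h = h' ;; g' -> (g ⊠ f) ;; (h ⊠ idm b) = (h' ⊠ idm a) ;; (g' ⊠ f).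
Proof. intros E. now rewrite <- !(tensh_comp HV), comp_idl, comp_idr, E. Qed.

Lemma alpha_inv_nat a b c a' b' c' (f : Hom a a') (g : Hom b b') (h : Hom c c') :
  (f ⊠ (g ⊠ h)) ;; alpha_inv V a' b' c' = alpha_inv V a b c ;; ((f ⊠ g) ⊠ h).
Proof.
  apply (split_mono_cancel (alpha_iso1 HV a' b' c')).
  assoc_r. rewrite (alpha_iso2 HV), comp_idr, (alpha_nat HV).
  arewrite (alpha_iso2 HV). now rewrite comp_idl.
Qed.

Lemma tensh_unit_l_inj {a b : C} (f g : Hom a b) : idm K ⊠ f = idm K ⊠ g -> f = g.
Proof.
  intros E. apply (split_epi_cancel (lu_iso2 HV a)).
  now rewrite <- !(lu_nat HV), E.
Qed.

Lemma tensh_unit_r_inj {a b : C} (f g : Hom a b) : f ⊠ idm K = g ⊠ idm K -> f = g.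
Proof.
  intros E. apply (split_epi_cancel (ru_iso2 HV a)).
  now rewrite <- !(ru_nat HV), E.
Qed.

Lemma alpha_lu a b : alpha V K a b ;; lu V (a ⊗ b) = lu V a ⊠ idm b.
Proof.
  apply tensh_unit_l_inj.
  apply (split_epi_cancel (alpha_iso2 HV K (K ⊗ a) b)).
  assert (Hinv : (alpha_inv V K K a ⊠ idm b) ;; (alpha V K K a ⊠ idm b) = idm _)
    by now rewrite <- (tensh_comp HV), (alpha_iso2 HV), comp_idl, (tensh_id HV).
  apply (split_epi_cancel Hinv).
  rewrite (tensh_compr _ _ (idm K)). arewrite <- (pentagon HV).
  rewrite (triangle HV), <- (tensh_id HV a b), <- (alpha_nat HV), <- (triangle HV).
  rewrite tensh_compl. assoc_r. now rewrite (alpha_nat HV).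
Qed.

Lemma alpha_ru a b : alpha V a b K ;; (idm a ⊠ ru V b) = ru V (a ⊗ b).
Proof.
  apply tensh_unit_r_inj, (split_mono_cancel (alpha_iso1 HV a b K)).
  rewrite tensh_compl. assoc_r. rewrite (alpha_nat HV).
  rewrite <- (triangle HV b K), tensh_compr, <- !comp_assoc, <- (pentagon HV).
  assoc_r. rewrite <- (triangle HV (a ⊗ b) K). assoc_r.
  now rewrite <- (tensh_id HV a b), (alpha_nat HV).
Qed.

Lemma alpha_inv_lu a b : alpha_inv V K a b ;; (lu V a ⊠ idm b) = lu V (a ⊗ b).
Proof. rewrite <- alpha_lu. arewrite (alpha_iso2 HV). apply comp_idl. Qed.

Lemma alpha_inv_ru a b : alpha_inv V a b K ;; ru V (a ⊗ b) = idm a ⊠ ru V b.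
Proof. rewrite <- alpha_ru. arewrite (alpha_iso2 HV). apply comp_idl. Qed.

Lemma interchange_nat {w x y z w' x' y' z' : C} (f1 : Hom w w') (f2 : Hom x x')
    (f3 : Hom y y') (f4 : Hom z z') :
  ((f1 ⊠ f2) ⊠ (f3 ⊠ f4)) ;; interchange V w' x' y' z'
  = interchange V w x y z ;; ((f1 ⊠ f3) ⊠ (f2 ⊠ f4)).
Proof.
  unfold interchange. assoc_r.
  arewrite (alpha_nat HV).
  arewrite (tensh_slide_r f1 (alpha_inv_nat _ _ _ _ _ _ f2 f3 f4)).
  arewrite (tensh_slide_r f1 (tensh_slide_l f4 (sym_nat HV f2 f3))).
  arewrite (tensh_slide_r f1 (alpha_nat HV f3 f2 f4)).
  now arewrite alpha_inv_nat.
Qed.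

Lemma interchange_unitors x y :
  interchange V K x y K ;; (lu V y ⊠ ru V x) = (lu V x ⊠ ru V y) ;; sym V x y.
Proof.
  unfold interchange. assoc_r.
  rewrite (tensh_split_l (lu V y)). arewrite alpha_inv_lu.
  arewrite (lu_nat HV). arewrite (lu_nat HV). arewrite (lu_nat HV).
  arewrite alpha_lu. arewrite alpha_ru. arewrite (ru_nat HV). arewrite alpha_inv_ru.
  rewrite (tensh_split_l (lu V x) (ru V y)). now assoc_r.
Qed.
End SymmetricMonoidal.

Section EMMonoidal.
Context {C : Category} {V : SMCData C} (HV : isSMC V) {M : MonadData V} (HM : isSCMonad M).
Local Notation "a ⊗ b" := (tens V a b) (at level 30, right associativity).
Local Notation "f ⊠ g" := (tensh V f g) (at level 30, right associativity).
Local Notation K := (unitK V).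
Local Notation T := (Tob M).
Local Notation Th := (Thom M).
Local Notation EC := (EMcat HM).

Lemma nn_nat_l {a b a' : C} (f : Hom a a') :
  nn M a b ;; (Th f ⊠ idm (T b)) = Th (f ⊠ idm b) ;; nn M a' b.
Proof. now rewrite (nn_nat HM), (Thom_id HM). Qed.

Lemma nn_nat_r {a b b' : C} (g : Hom b b') :
  nn M a b ;; (idm (T a) ⊠ Th g) = Th (idm a ⊠ g) ;; nn M a b'.
Proof. now rewrite (nn_nat HM), (Thom_id HM). Qed.

Definition is_alg_hom (x y : EMob M) (f : Hom (car x) (car y)) : Prop :=
  act x ;; f = Th f ;; act y.

Lemma alg_hom_inv {x y : EMob M} {f : Hom (car x) (car y)} {g : Hom (car y) (car x)} :
  is_alg_hom x y f -> f ;; g = idm _ -> g ;; f = idm _ -> is_alg_hom y x g.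
Proof.
  unfold is_alg_hom. intros Hf Hfg Hgf.
  rewrite <- (comp_idl (act y)), <- (Thom_id HM), <- Hgf, (Thom_comp HM).
  arewrite <- Hf. now rewrite Hfg, comp_idr.
Qed.

Definition tens_act (x y : EMob M) : Hom (T (car x ⊗ car y)) (car x ⊗ car y) :=
  nn M _ _ ;; (act x ⊠ act y).

Lemma tens_act_eta (x y : EMob M) : eta M (car x ⊗ car y) ;; tens_act x y = idm _.
Proof.
  unfold tens_act. arewrite (eta_nn HM).
  now rewrite <- (tensh_comp HV), !act_eta, (tensh_id HV).
Qed.

Lemma tens_act_mu (x y : EMob M) :
  mu M (car x ⊗ car y) ;; tens_act x y = Th (tens_act x y) ;; tens_act x y.
Proof.
  unfold tens_act. arewrite (mu_nn HM).
  rewrite <- (tensh_comp HV), !act_mu, (tensh_comp HV), (Thom_comp HM).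
  now arewrite <- (nn_nat HM).
Qed.

Definition tens_alg (x y : EMob M) : EMob M :=
  {| car := car x ⊗ car y; act := tens_act x y;
     act_eta := tens_act_eta x y; act_mu := tens_act_mu x y |}.

Definition unit_alg : EMob M :=
  {| car := K; act := nK M; act_eta := eta_nK HM; act_mu := mu_nK HM |}.

Lemma tensh_is_alg_hom {a b c d : EC} (f : Hom a b) (g : Hom c d) :
  is_alg_hom (tens_alg a c) (tens_alg b d) (UT f ⊠ UT g).
Proof.
  destruct f as [f Hf], g as [g Hg]. unfold is_alg_hom, tens_alg, tens_act; simpl.
  assoc_r. rewrite <- (tensh_comp HV), Hf, Hg, (tensh_comp HV).
  now arewrite <- (nn_nat HM).
Qed.

Lemma alpha_is_alg_hom (a b c : EMob M) :
  is_alg_hom (tens_alg (tens_alg a b) c) (tens_alg a (tens_alg b c))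
    (alpha V (car a) (car b) (car c)).
Proof.
  unfold is_alg_hom, tens_alg, tens_act; simpl.
  assoc_r. rewrite (tensh_compl HV). assoc_r. arewrite (alpha_nat HV).
  rewrite (tensh_compr HV). now arewrite (nn_assoc HM).
Qed.

Lemma lu_is_alg_hom (a : EMob M) : is_alg_hom (tens_alg unit_alg a) a (lu V (car a)).
Proof.
  unfold is_alg_hom, tens_alg, tens_act; simpl.
  rewrite (tensh_split_l HV (nK M)). arewrite (lu_nat HV). now arewrite (nn_lunit HM).
Qed.

Lemma ru_is_alg_hom (a : EMob M) : is_alg_hom (tens_alg a unit_alg) a (ru V (car a)).
Proof.
  unfold is_alg_hom, tens_alg, tens_act; simpl.
  rewrite (tensh_split_r HV _ (nK M)). arewrite (ru_nat HV). now arewrite (nn_runit HM).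
Qed.

Lemma sym_is_alg_hom (a b : EMob M) :
  is_alg_hom (tens_alg a b) (tens_alg b a) (sym V (car a) (car b)).
Proof.
  unfold is_alg_hom, tens_alg, tens_act; simpl.
  arewrite (sym_nat HV). now arewrite (nn_sym HM).
Qed.

Definition EM_smc : SMCData EC :=
  @Build_SMCData EC tens_alg
    (fun a b c d f g => exist _ _ (tensh_is_alg_hom f g))
    unit_alg
    (fun a b c => exist _ _ (alpha_is_alg_hom a b c))
    (fun a b c => exist _ _
       (alg_hom_inv (alpha_is_alg_hom a b c) (alpha_iso1 HV _ _ _) (alpha_iso2 HV _ _ _)))
    (fun a => exist _ _ (lu_is_alg_hom a))
    (fun a => exist _ _ (alg_hom_inv (lu_is_alg_hom a) (lu_iso1 HV _) (lu_iso2 HV _)))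
    (fun a => exist _ _ (ru_is_alg_hom a))
    (fun a => exist _ _ (alg_hom_inv (ru_is_alg_hom a) (ru_iso1 HV _) (ru_iso2 HV _)))
    (fun a b => exist _ _ (sym_is_alg_hom a b)).

Lemma EM_smc_isSMC : isSMC EM_smc.
Proof.
  destruct HV. constructor; intros; apply EMhom_eq; simpl; auto.
Qed.
End EMMonoidal.

Section HopfMonad.
Context {C : Category} {V : SMCData C} (HV : isSMC V) {M : MonadData V} (HM : isSCMonad M)
  (Hopf : isHopf M).
Local Notation "a ⊗ b" := (tens V a b) (at level 30, right associativity).
Local Notation "f ⊠ g" := (tensh V f g) (at level 30, right associativity).
Local Notation T := (Tob M).
Local Notation Th := (Thom M).
Local Notation η := (eta M).
Local Notation μ := (mu M).
Local Notation n := (nn M).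

Definition fusion_r_inv (a b : C) : Hom (T a ⊗ T b) (T (T a ⊗ b)) :=
  proj1_sig (constructive_indefinite_description _ (proj2 (Hopf a b))).

Lemma fusion_r_inv_spec a b :
  fusion_r M a b ;; fusion_r_inv a b = idm _ /\ fusion_r_inv a b ;; fusion_r M a b = idm _.
Proof. exact (proj2_sig (constructive_indefinite_description _ (proj2 (Hopf a b)))). Qed.

Lemma fusion_rK a b : fusion_r M a b ;; fusion_r_inv a b = idm _.
Proof. apply fusion_r_inv_spec. Qed.

Lemma fusion_r_invK a b : fusion_r_inv a b ;; fusion_r M a b = idm _.
Proof. apply fusion_r_inv_spec. Qed.

Lemma fusion_r_nat {a b a' b' : C} (u : Hom a a') (v : Hom b b') :
  Th (Th u ⊠ v) ;; fusion_r M a' b' = fusion_r M a b ;; (Th u ⊠ Th v).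
Proof.
  unfold fusion_r. arewrite (nn_nat HM).
  now rewrite <- !(tensh_comp HV), (mu_nat HM), comp_idl, comp_idr.
Qed.

Lemma fusion_r_inv_nat {a b a' b' : C} (u : Hom a a') (v : Hom b b') :
  (Th u ⊠ Th v) ;; fusion_r_inv a' b' = fusion_r_inv a b ;; Th (Th u ⊠ v).
Proof.
  apply (split_mono_cancel (fusion_rK a' b')).
  assoc_r. rewrite fusion_r_invK, comp_idr, fusion_r_nat.
  arewrite fusion_r_invK. now rewrite comp_idl.
Qed.

Lemma fusion_r_inv_nat_l {a b a' : C} (u : Hom a a') :
  (Th u ⊠ idm (T b)) ;; fusion_r_inv a' b = fusion_r_inv a b ;; Th (Th u ⊠ idm b).
Proof. now rewrite <- fusion_r_inv_nat, (Thom_id HM). Qed.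

Lemma fusion_r_inv_nat_r {a b b' : C} (v : Hom b b') :
  (idm (T a) ⊠ Th v) ;; fusion_r_inv a b' = fusion_r_inv a b ;; Th (idm (T a) ⊠ v).
Proof. now rewrite <- (Thom_id HM a), fusion_r_inv_nat, (Thom_id HM). Qed.

Lemma eta_fusion_r a b : η (T a ⊗ b) ;; fusion_r M a b = idm (T a) ⊠ η b.
Proof.
  unfold fusion_r. arewrite (eta_nn HM).
  now rewrite <- (tensh_comp HV), (mu_eta_l HM), comp_idr.
Qed.

Lemma eta_fusion_r_inv a b : (idm (T a) ⊠ η b) ;; fusion_r_inv a b = η (T a ⊗ b).
Proof. rewrite <- eta_fusion_r. arewrite fusion_rK. apply comp_idr. Qed.

Lemma Th_eta_fusion_r a b : Th (η a ⊠ idm b) ;; fusion_r M a b = n a b.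
Proof.
  unfold fusion_r. arewrite (nn_nat HM).
  rewrite <- (tensh_comp HV), (mu_eta_r HM), (Thom_id HM), comp_idl, (tensh_id HV).
  apply comp_idr.
Qed.

Lemma Th_mu_fusion_r a b :
  Th (μ a ⊠ idm b) ;; fusion_r M a b = fusion_r M (T a) b ;; (μ a ⊠ idm (T b)).
Proof.
  unfold fusion_r. arewrite (nn_nat HM).
  now rewrite <- !(tensh_comp HV), (Thom_id HM), comp_idl, (mu_assoc HM).
Qed.

Lemma nn_fusion_r_inv a b :
  n a b ;; (η (T a) ⊠ idm (T b)) ;; fusion_r_inv (T a) b ;; Th (μ a ⊠ idm b)
  = Th (η a ⊠ idm b).
Proof.
  apply (split_mono_cancel (fusion_rK a b)).
  rewrite Th_eta_fusion_r. arewrite Th_mu_fusion_r. arewrite fusion_r_invK.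
  rewrite comp_idl, <- (tensh_comp HV), (mu_eta_l HM), comp_idl, (tensh_id HV).
  apply comp_idr.
Qed.

Section AlgFusion.
Variable x : EMob M.
Local Notation A := (car x).
Local Notation a := (act x).

Definition alg_fusion (Y : C) : Hom (T (A ⊗ Y)) (A ⊗ T Y) := n A Y ;; (a ⊠ idm (T Y)).

Definition alg_fusion_inv (Y : C) : Hom (A ⊗ T Y) (T (A ⊗ Y)) :=
  (η A ⊠ idm (T Y)) ;; fusion_r_inv A Y ;; Th (a ⊠ idm Y).

Lemma Th_act_alg_fusion Y :
  Th (a ⊠ idm Y) ;; alg_fusion Y = fusion_r M A Y ;; (a ⊠ idm (T Y)).
Proof.
  unfold alg_fusion, fusion_r. arewrite (nn_nat HM).
  now rewrite (Thom_id HM), <- !(tensh_comp HV), comp_idl, (act_mu x).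
Qed.

Lemma alg_fusion_invK Y : alg_fusion_inv Y ;; alg_fusion Y = idm _.
Proof.
  unfold alg_fusion_inv. arewrite Th_act_alg_fusion. arewrite fusion_r_invK.
  now rewrite comp_idl, <- (tensh_comp HV), (act_eta x), comp_idl, (tensh_id HV).
Qed.

Lemma alg_fusionK Y : alg_fusion Y ;; alg_fusion_inv Y = idm _.
Proof.
  unfold alg_fusion, alg_fusion_inv. assoc_r.
  arewrite <- (tensh_comp HV). rewrite comp_idl, (eta_nat HM), (tensh_compl HV).
  arewrite fusion_r_inv_nat_l. arewrite <- (Thom_comp HM).
  rewrite <- (tensh_comp HV), comp_idl, <- (act_mu x), (tensh_compl HV), (Thom_comp HM).
  arewrite nn_fusion_r_inv.
  now rewrite <- (Thom_comp HM), <- (tensh_comp HV), (act_eta x), comp_idl, (tensh_id HV),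
    (Thom_id HM).
Qed.

Lemma eta_alg_fusion_inv Y : (idm A ⊠ η Y) ;; alg_fusion_inv Y = η (A ⊗ Y).
Proof.
  unfold alg_fusion_inv. arewrite (tensh_idC HV). arewrite eta_fusion_r_inv.
  arewrite <- (eta_nat HM).
  arewrite <- (tensh_comp HV).
  now rewrite (act_eta x), comp_idl, (tensh_id HV), comp_idl.
Qed.

Lemma alg_fusion_inv_nat {Y Y' : C} (g : Hom Y Y') :
  (idm A ⊠ Th g) ;; alg_fusion_inv Y' = alg_fusion_inv Y ;; Th (idm A ⊠ g).
Proof.
  unfold alg_fusion_inv. arewrite (tensh_idC HV). arewrite fusion_r_inv_nat_r.
  arewrite <- (Thom_comp HM). now rewrite tensh_idC, (Thom_comp HM).
Qed.

Lemma alg_fusion_mu Y :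
  μ (A ⊗ Y) ;; alg_fusion Y = Th (alg_fusion Y) ;; n A (T Y) ;; (a ⊠ μ Y).
Proof.
  unfold alg_fusion. arewrite (mu_nn HM). arewrite <- (tensh_comp HV).
  rewrite comp_idr, (act_mu x), (Thom_comp HM). assoc_r.
  arewrite <- (nn_nat_l HM). arewrite <- (tensh_comp HV). now rewrite comp_idl.
Qed.

Lemma alg_fusion_inv_mu Y :
  (idm A ⊠ μ Y) ;; alg_fusion_inv Y
  = alg_fusion_inv (T Y) ;; Th (alg_fusion_inv Y) ;; μ (A ⊗ Y).
Proof.
  apply (split_epi_cancel (alg_fusion_invK (T Y))).
  apply (split_mono_cancel (alg_fusionK Y)).
  assoc_r. arewrite alg_fusion_invK. rewrite comp_idr.
  arewrite alg_fusionK. rewrite comp_idl.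
  arewrite alg_fusion_mu. arewrite <- (Thom_comp HM).
  rewrite alg_fusion_invK, (Thom_id HM), comp_idl.
  unfold alg_fusion. assoc_r. arewrite <- (tensh_comp HV).
  now rewrite comp_idl, comp_idr.
Qed.
End AlgFusion.

Lemma tens_act_alg_fusion (x y : EMob M) :
  tens_act x y = alg_fusion x (car y) ;; (idm (car x) ⊠ act y).
Proof.
  unfold tens_act, alg_fusion. assoc_r. now rewrite <- (tensh_split_l HV).
Qed.

Section Closed.
Context {W : ClosedData V} (HW : isClosed W).

Lemma ev_tensh_inj {a b c : C} (g1 g2 : Hom c (ihom W a b)) :
  (idm a ⊠ g1) ;; ev W a b = (idm a ⊠ g2) ;; ev W a b -> g1 = g2.
Proof. intros E. now rewrite <- (cur_eta HW g1), <- (cur_eta HW g2), E. Qed.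

Definition ihom_act (x y : EMob M) :
    Hom (T (ihom W (car x) (car y))) (ihom W (car x) (car y)) :=
  cur W (alg_fusion_inv x _ ;; Th (ev W _ _) ;; act y).

Lemma ihom_act_ev (x y : EMob M) :
  (idm (car x) ⊠ ihom_act x y) ;; ev W _ _ = alg_fusion_inv x _ ;; Th (ev W _ _) ;; act y.
Proof. unfold ihom_act. now rewrite (cur_beta HW). Qed.

Lemma ihom_act_eta (x y : EMob M) : η _ ;; ihom_act x y = idm _.
Proof.
  apply ev_tensh_inj. rewrite (tensh_compr HV). arewrite ihom_act_ev.
  arewrite eta_alg_fusion_inv. arewrite <- (eta_nat HM).
  now rewrite (act_eta y), comp_idr, (tensh_id HV), comp_idl.
Qed.

Lemma ihom_act_mu (x y : EMob M) : μ _ ;; ihom_act x y = Th (ihom_act x y) ;; ihom_act x y.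
Proof.
  apply ev_tensh_inj. rewrite !(tensh_compr HV). arewrite ihom_act_ev.
  arewrite alg_fusion_inv_mu. arewrite alg_fusion_inv_nat. arewrite <- (Thom_comp HM).
  rewrite ihom_act_ev, !(Thom_comp HM). assoc_r.
  arewrite <- (act_mu y). now arewrite (mu_nat HM).
Qed.

Definition ihom_alg (x y : EMob M) : EMob M :=
  {| car := ihom W (car x) (car y); act := ihom_act x y;
     act_eta := ihom_act_eta x y; act_mu := ihom_act_mu x y |}.

Lemma ev_is_alg_hom (x y : EMob M) :
  is_alg_hom (tens_alg HV HM x (ihom_alg x y)) y (ev W (car x) (car y)).
Proof.
  unfold is_alg_hom. simpl. rewrite tens_act_alg_fusion; simpl. arewrite ihom_act_ev.
  arewrite alg_fusionK. apply comp_idl.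
Qed.

Lemma cur_is_alg_hom (x y z : EMob M) (f : Hom (car x ⊗ car z) (car y)) :
  is_alg_hom (tens_alg HV HM x z) y f -> is_alg_hom z (ihom_alg x y) (cur W f).
Proof.
  unfold is_alg_hom. simpl. intros Hf. apply ev_tensh_inj.
  rewrite !(tensh_compr HV). assoc_r. rewrite (cur_beta HW). arewrite ihom_act_ev.
  arewrite alg_fusion_inv_nat. arewrite <- (Thom_comp HM). rewrite (cur_beta HW).
  arewrite <- Hf. rewrite tens_act_alg_fusion. arewrite alg_fusion_invK. now rewrite comp_idl.
Qed.

Definition EM_closed : ClosedData (EM_smc HV HM) :=
  @Build_ClosedData (EMcat HM) (EM_smc HV HM) ihom_alg
    (fun x y => exist _ _ (ev_is_alg_hom x y))
    (fun x y z f => exist _ _ (cur_is_alg_hom x y z (UT f) (proj2_sig f))).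

Lemma EM_closed_isClosed : isClosed EM_closed.
Proof. destruct HW. constructor; intros; apply EMhom_eq; simpl; auto. Qed.
End Closed.
End HopfMonad.

Section Modality.
Context {C : Category} {V : SMCData C} (HV : isSMC V) {M : MonadData V} (HM : isSCMonad M)
  {B : MCMData V} (HB : isMCM B) (Lm : ExpLifting B M).
Local Notation "a ⊗ b" := (tens V a b) (at level 30, right associativity).
Local Notation "f ⊠ g" := (tensh V f g) (at level 30, right associativity).
Local Notation K := (unitK V).
Local Notation T := (Tob M).
Local Notation Th := (Thom M).
Local Notation bo := (bob B).
Local Notation bh := (bhom B).
Local Notation δ := (delta B).
Local Notation ε := (eps B).
Local Notation Δ := (dup B).
Local Notation e := (er B).
Local Notation m := (mm B).
Local Notation mk := (mK B).
Local Notation λ := (dist Lm).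

Definition tens_coalg (P Q : C) : Hom (bo P ⊗ bo Q) (bo (bo P ⊗ bo Q)) :=
  (δ P ⊠ δ Q) ;; m (bo P) (bo Q).

Definition proj_l (P Q : C) : Hom (bo P ⊗ bo Q) (bo P) :=
  (idm (bo P) ⊠ e Q) ;; ru V (bo P).

Definition proj_r (P Q : C) : Hom (bo P ⊗ bo Q) (bo Q) :=
  (e P ⊠ idm (bo Q)) ;; lu V (bo Q).

Lemma coalg_hom_unit_eq_er (Z : C) (ζ : Hom Z (bo Z)) (h : Hom Z K) :
  ζ ;; bh h = h ;; mk -> h = ζ ;; e Z.
Proof.
  intros Hh. rewrite <- (er_nat HB h). arewrite Hh.
  now rewrite (er_mK HB), comp_idr.
Qed.

Lemma dup_er_l P : Δ P ;; (e P ⊠ idm (bo P)) = lu_inv V (bo P).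
Proof.
  apply (split_mono_cancel (lu_iso1 HV (bo P))).
  rewrite (lu_iso2 HV). apply (dup_counit_l HB).
Qed.

Lemma dup_er_r P : Δ P ;; (idm (bo P) ⊠ e P) = ru_inv V (bo P).
Proof.
  apply (split_mono_cancel (ru_iso1 HV (bo P))).
  rewrite (ru_iso2 HV). apply (dup_counit_r HB).
Qed.

Lemma delta_dup_eps P : δ P ;; Δ (bo P) ;; (ε (bo P) ⊠ ε (bo P)) = Δ P.
Proof.
  arewrite (delta_dup HB).
  now rewrite <- (tensh_comp HV), (comonad_counit_l HB), (tensh_id HV), comp_idr.
Qed.

Lemma coalg_hom_tens_decomp {Z P Q : C} {ζ : Hom Z (bo Z)} {h : Hom Z (bo P ⊗ bo Q)} :
  ζ ;; bh h = h ;; tens_coalg P Q ->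
  h = ζ ;; Δ Z ;; ((ε Z ;; h ;; proj_r P Q) ⊠ (ε Z ;; h ;; proj_l P Q))
      ;; sym V (bo Q) (bo P).
Proof.
  intros Hh. symmetry. rewrite <- !(eps_nat HB). assoc_r.
  rewrite (tensh_comp HV (bh h) _ (bh h) _). assoc_r.
  arewrite <- (dup_nat HB). arewrite Hh. unfold tens_coalg.
  arewrite (dup_m HB). arewrite <- (tensh_comp HV (m (bo P) (bo Q))).
  arewrite (eps_m HB). arewrite (eps_m HB).
  rewrite (tensh_comp HV (ε _ ⊠ ε _)). assoc_r. arewrite <- (interchange_nat HV).
  arewrite <- (tensh_comp HV). arewrite <- (tensh_comp HV).
  arewrite delta_dup_eps. arewrite delta_dup_eps.
  unfold proj_l, proj_r. rewrite (tensh_comp HV). assoc_r.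
  arewrite <- (interchange_nat HV). arewrite <- (tensh_comp HV).
  rewrite dup_er_l, dup_er_r. arewrite (interchange_unitors HV). arewrite <- (tensh_comp HV).
  rewrite (lu_iso2 HV), (ru_iso2 HV), (tensh_id HV), comp_idl, (sym_invol HV).
  apply comp_idr.
Qed.

Lemma coalg_hom_tens_ext {Z P Q : C} (ζ : Hom Z (bo Z)) {h1 h2 : Hom Z (bo P ⊗ bo Q)} :
  ζ ;; bh h1 = h1 ;; tens_coalg P Q -> ζ ;; bh h2 = h2 ;; tens_coalg P Q ->
  h1 ;; proj_l P Q = h2 ;; proj_l P Q -> h1 ;; proj_r P Q = h2 ;; proj_r P Q -> h1 = h2.
Proof.
  intros H1 H2 El Er.
  rewrite (coalg_hom_tens_decomp H1), (coalg_hom_tens_decomp H2).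
  now rewrite !(comp_assoc (ε Z)), El, Er.
Qed.

Definition dist_coalg (A : C) : Hom (T (bo A)) (bo (T (bo A))) := Th (δ A) ;; λ (bo A).

Lemma dist_er A : λ A ;; e (T A) = Th (e A) ;; nK M.
Proof.
  transitivity (dist_coalg A ;; e (T (bo A))); [| symmetry];
    apply coalg_hom_unit_eq_er; unfold dist_coalg; rewrite (bhom_comp HB).
  - arewrite (dist_delta Lm). now arewrite (er_coalg HB).
  - arewrite (dist_mK Lm). arewrite <- (Thom_comp HM).
    rewrite <- (er_coalg HB), (Thom_comp HM). now arewrite (dist_nat Lm).
Qed.

Lemma dist_dup_proj_l A :
  λ A ;; Δ (T A) ;; proj_l (T A) (T A)
  = Th (Δ A) ;; nn M _ _ ;; (λ A ⊠ λ A) ;; proj_l (T A) (T A).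
Proof.
  unfold proj_l. arewrite (dup_counit_r HB). arewrite <- (tensh_comp HV).
  rewrite comp_idr, dist_er, (tensh_split_r HV (λ A)). assoc_r.
  arewrite (ru_nat HV). rewrite (tensh_compr HV). assoc_r.
  arewrite (nn_nat_r HM). arewrite (nn_runit HM).
  arewrite <- (Thom_comp HM). arewrite <- (Thom_comp HM). arewrite (dup_counit_r HB).
  now rewrite (Thom_id HM), comp_idl.
Qed.

Lemma dist_dup_proj_r A :
  λ A ;; Δ (T A) ;; proj_r (T A) (T A)
  = Th (Δ A) ;; nn M _ _ ;; (λ A ⊠ λ A) ;; proj_r (T A) (T A).
Proof.
  unfold proj_r. arewrite (dup_counit_l HB). arewrite <- (tensh_comp HV).
  rewrite comp_idr, dist_er, (tensh_split_l HV _ (λ A)). assoc_r.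
  arewrite (lu_nat HV). rewrite (tensh_compl HV). assoc_r.
  arewrite (nn_nat_l HM). arewrite (nn_lunit HM).
  arewrite <- (Thom_comp HM). arewrite <- (Thom_comp HM). arewrite (dup_counit_l HB).
  now rewrite (Thom_id HM), comp_idl.
Qed.

Lemma dist_dup A : λ A ;; Δ (T A) = Th (Δ A) ;; nn M _ _ ;; (λ A ⊠ λ A).
Proof.
  apply (coalg_hom_tens_ext (dist_coalg A)); unfold dist_coalg, tens_coalg;
    try solve [apply dist_dup_proj_l | apply dist_dup_proj_r].
  - rewrite (bhom_comp HB). arewrite (dist_delta Lm). now arewrite (dup_coalg HB).
  - rewrite !(bhom_comp HB). arewrite <- (dist_nat Lm). arewrite <- (Thom_comp HM).
    rewrite (dup_coalg HB), !(Thom_comp HM). assoc_r.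
    arewrite <- (dist_m Lm). arewrite <- (m_nat HB). arewrite (nn_nat HM).
    arewrite <- (tensh_comp HV). arewrite <- (tensh_comp HV).
    arewrite (dist_delta Lm).
    rewrite (tensh_comp HV). now assoc_r.
Qed.

Definition bang_act (x : EMob M) : Hom (T (bo (car x))) (bo (car x)) :=
  λ (car x) ;; bh (act x).

Lemma bang_act_eta (x : EMob M) : eta M (bo (car x)) ;; bang_act x = idm _.
Proof.
  unfold bang_act. arewrite (dist_eta Lm).
  now rewrite <- (bhom_comp HB), (act_eta x), (bhom_id HB).
Qed.

Lemma bang_act_mu (x : EMob M) :
  mu M (bo (car x)) ;; bang_act x = Th (bang_act x) ;; bang_act x.
Proof.
  unfold bang_act. arewrite (dist_mu Lm). arewrite <- (bhom_comp HB).
  rewrite (act_mu x), (bhom_comp HB), (Thom_comp HM). assoc_r.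
  now arewrite <- (dist_nat Lm).
Qed.

Definition bang_alg (x : EMob M) : EMob M :=
  {| car := bo (car x); act := bang_act x;
     act_eta := bang_act_eta x; act_mu := bang_act_mu x |}.

Lemma bhom_is_alg_hom (x y : EMob M) (f : Hom (car x) (car y)) :
  is_alg_hom x y f -> is_alg_hom (bang_alg x) (bang_alg y) (bh f).
Proof.
  unfold is_alg_hom, bang_alg, bang_act; simpl. intros Hf.
  arewrite <- (bhom_comp HB). rewrite Hf, (bhom_comp HB). now arewrite <- (dist_nat Lm).
Qed.

Lemma delta_is_alg_hom (x : EMob M) :
  is_alg_hom (bang_alg x) (bang_alg (bang_alg x)) (δ (car x)).
Proof.
  unfold is_alg_hom, bang_alg, bang_act; simpl.
  arewrite (delta_nat HB). arewrite <- (dist_delta Lm). now rewrite (bhom_comp HB).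
Qed.

Lemma eps_is_alg_hom (x : EMob M) : is_alg_hom (bang_alg x) x (ε (car x)).
Proof.
  unfold is_alg_hom, bang_alg, bang_act; simpl.
  arewrite (eps_nat HB). now arewrite (dist_eps Lm).
Qed.

Lemma mm_is_alg_hom (x y : EMob M) :
  is_alg_hom (tens_alg HV HM (bang_alg x) (bang_alg y)) (bang_alg (tens_alg HV HM x y))
    (m (car x) (car y)).
Proof.
  unfold is_alg_hom, bang_alg, bang_act, tens_alg, tens_act; simpl.
  assoc_r. rewrite (tensh_comp HV). assoc_r.
  arewrite (m_nat HB). arewrite (dist_m Lm). now rewrite (bhom_comp HB).
Qed.

Lemma mK_is_alg_hom : is_alg_hom (unit_alg HM) (bang_alg (unit_alg HM)) mk.
Proof.
  unfold is_alg_hom, bang_alg, bang_act; simpl. now arewrite (dist_mK Lm).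
Qed.

Lemma er_is_alg_hom (x : EMob M) : is_alg_hom (bang_alg x) (unit_alg HM) (e (car x)).
Proof.
  unfold is_alg_hom, bang_alg, bang_act; simpl.
  arewrite (er_nat HB). apply dist_er.
Qed.

Lemma dup_is_alg_hom (x : EMob M) :
  is_alg_hom (bang_alg x) (tens_alg HV HM (bang_alg x) (bang_alg x)) (Δ (car x)).
Proof.
  unfold is_alg_hom, bang_alg, bang_act, tens_alg, tens_act; simpl.
  arewrite (dup_nat HB). arewrite dist_dup. now rewrite (tensh_comp HV).
Qed.

Definition EM_modality : MCMData (EM_smc HV HM) :=
  @Build_MCMData (EMcat HM) (EM_smc HV HM) bang_alg
    (fun x y f => exist _ _ (bhom_is_alg_hom x y (UT f) (proj2_sig f)))
    (fun x => exist _ _ (delta_is_alg_hom x))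
    (fun x => exist _ _ (eps_is_alg_hom x))
    (fun x => exist _ _ (dup_is_alg_hom x))
    (fun x => exist _ _ (er_is_alg_hom x))
    (fun x y => exist _ _ (mm_is_alg_hom x y))
    (exist _ _ mK_is_alg_hom).

Lemma EM_modality_isMCM : isMCM EM_modality.
Proof.
  destruct HB. constructor; intros; apply EMhom_eq; unfold interchange; simpl; auto.
Qed.
End Modality.

Theorem theorem6p12 (C : Category) (L : LinearCategory C)
  (ML : MELLLiftingMonad L) :
  exists LT : LinearCategory (EMcat (ml_M_ax ML)),
    EM_linear_strict LT.
Proof.
  set (HV := lc_V_ax L).
  exists {| lc_V_ax := EM_smc_isSMC HV (ml_M_ax ML);
            lc_W_ax := EM_closed_isClosed HV (ml_M_ax ML) (ml_hopf ML) (lc_W_ax L);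
            lc_B_ax := EM_modality_isMCM HV (ml_M_ax ML) (lc_B_ax L) (ml_lift ML) |}.
  constructor; try reflexivity.
  intros a b c f g Hfg. apply inj_pair2 in Hfg. unfold hom_heq, UT in *. simpl.
  now rewrite <- Hfg.
Qed.
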